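(* Assume Assumption A and that the limiting chain $X_R$ has $\mathfrak n\ge2$ recurrent classes $\mathscr E_1,\dots,\mathscr E_{\mathfrak n}$; let $\breve{\mathscr E}_x=\bigcup_{y\ne x}\mathscr E_y$. Then the family of sequences $\big(\mathrm{Cap}_N(\mathscr E_x,\breve{\mathscr E}_x)/\mu_N(\mathscr E_x)\big)_{N\ge1}$, $x\in\{1,\dots,\mathfrak n\}$, is ordered.
   Context: Setting: $E$ is a fixed finite set; for each $N\ge1$, $(\eta^N_t)$ is a continuous-time irreducible Markov chain on $E$ with jump rates $R_N(\eta,\xi)$, holding rates $\lambda_N(\eta)=\sum_{\xi\ne\eta}R_N(\eta,\xi)$, unique invariant probability measure $\mu_N$; $\mathbb P_\eta$ the law started at $\eta$; $H_A=\inf\{t>0:\eta^N_t\in A\}$, $H^+_A=\inf\{t>\tau_1:\eta^N_t\in A\}$, $\tau_1$ first jump time; $\mathrm{Cap}_N(A,B)=\sum_{\eta\in A}\mu_N(\eta)\lambda_N(\eta)\mathbb P_\eta[H_B<H^+_A]$. Ordered families: a finite family of sequences of positive reals $(a^r_N)$, $r\in\mathfrak R$, is ordered if for all $r\neq s$, $\arctan(a^r_N/a^s_N)$ converges. Assumption A: (i) for each $\eta\neq\xi$, either $R_N(\eta,\xi)=0$ for all $N$ or $R_N(\eta,\xi)>0$ for all $N$; let $\mathbb B$ be the set of pairs with positive rates. (ii) For every $m\ge1$ the family $\prod_{(\eta,\xi)\in\mathbb B}R_N(\eta,\xi)^{k(\eta,\xi)}$, $k:\mathbb B\to\mathbb Z_+$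 with $\sum k=m$, is ordered. Limiting chain: $\alpha_N^{-1}=\sum_\eta\sum_{\xi\ne\eta}R_N(\eta,\xi)$; $R(\eta,\xi)=\lim_N\alpha_NR_N(\eta,\xi)\in[0,1]$; $X_R$ is the Markov chain on $E$ with rates $R$. *)

From Stdlib Require Import Reals Lra Relations ClassicalEpsilon.
Open Scope R_scope.

(* The finite state space E is {0, ..., d-1} (states are nats < d).
   A sequence of rate matrices is RN : nat -> nat -> nat -> R, with
   RN N eta xi = R_N(eta, xi). *)

Fixpoint sumR (n : nat) (f : nat -> R) : R :=
  match n with O => 0 | S n' => sumR n' f + f n' end.

Fixpoint prodR (n : nat) (f : nat -> R) : R :=
  match n with O => 1 | S n' => prodR n' f * f n' end.

Fixpoint sumN (n : nat) (f : nat -> nat) : nat :=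
  match n with O => O | S n' => (sumN n' f + f n')%nat end.

(* the limit of a real sequence (chosen classically; meaningful when it exists) *)
Definition lim (u : nat -> R) : R := epsilon (inhabits 0) (fun l => Un_cv u l).

Definition decP (P : Prop) : bool :=
  if excluded_middle_informative P then true else false.

Definition holding (d : nat) (R0 : nat -> nat -> R) (eta : nat) : R :=
  sumR d (fun xi => if Nat.eq_dec xi eta then 0 else R0 eta xi).

Definition jumpP (d : nat) (R0 : nat -> nat -> R) (eta xi : nat) : R :=
  if Nat.eq_dec xi eta then 0 else R0 eta xi / holding d R0 eta.

(* probability, started at xi, that the chain is in B before (or at the same
   time as first being in) A within n jumps; being in B (resp. A) at time 0
   counts as H_B = 0 (resp. H_A = 0), as the paths are right-continuous. *)
Fixpoint hit_within (d : nat) (R0 : nat -> nat -> R) (A B : nat -> Prop)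
  (n : nat) (xi : nat) : R :=
  if decP (B xi) then 1 else if decP (A xi) then 0 else
  match n with
  | O => 0
  | S n' => sumR d (fun z => jumpP d R0 xi z * hit_within d R0 A B n' z)
  end.

(* P_eta[H_B < H_A^+] : after the first jump, hit B before A *)
Definition escape (d : nat) (R0 : nat -> nat -> R) (A B : nat -> Prop)
  (eta : nat) : R :=
  lim (fun n => sumR d (fun z => jumpP d R0 eta z * hit_within d R0 A B n z)).

Definition Cap (d : nat) (R0 : nat -> nat -> R) (mu : nat -> R)
  (A B : nat -> Prop) : R :=
  sumR d (fun eta => if decP (A eta)
                     then mu eta * holding d R0 eta * escape d R0 A B eta
                     else 0).

Definition measure (d : nat) (mu : nat -> R) (A : nat -> Prop) : R :=
  sumR d (fun eta => if decP (A eta) then mu eta else 0).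

Definition edge (d : nat) (R0 : nat -> nat -> R) (eta xi : nat) : Prop :=
  (eta < d)%nat /\ (xi < d)%nat /\ eta <> xi /\ 0 < R0 eta xi.

Definition reach (d : nat) (R0 : nat -> nat -> R) : nat -> nat -> Prop :=
  clos_refl_trans nat (edge d R0).

Definition irreducible (d : nat) (R0 : nat -> nat -> R) : Prop :=
  forall eta xi, (eta < d)%nat -> (xi < d)%nat -> reach d R0 eta xi.

Definition invariant_prob (d : nat) (R0 : nat -> nat -> R) (mu : nat -> R) : Prop :=
  (forall eta, (eta < d)%nat -> 0 <= mu eta) /\
  sumR d mu = 1 /\
  (forall xi, (xi < d)%nat ->
     sumR d (fun eta => if Nat.eq_dec eta xi then 0 else mu eta * R0 eta xi)
     = mu xi * holding d R0 xi).

Definition ordered_on {I : Type} (P : I -> Prop) (a : I -> nat -> R) : Prop :=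
  forall r s, P r -> P s -> r <> s ->
    exists l, Un_cv (fun N => atan (a r N / a s N)) l.

Definition Bset (d : nat) (RN : nat -> nat -> nat -> R) (eta xi : nat) : Prop :=
  (eta < d)%nat /\ (xi < d)%nat /\ eta <> xi /\ forall N, 0 < RN N eta xi.

Definition monomial (d : nat) (RN : nat -> nat -> nat -> R)
  (k : nat -> nat -> nat) (N : nat) : R :=
  prodR d (fun eta => prodR d (fun xi => RN N eta xi ^ k eta xi)).

Definition ksum (d : nat) (k : nat -> nat -> nat) : nat :=
  sumN d (fun eta => sumN d (fun xi => k eta xi)).

Definition AssumptionA (d : nat) (RN : nat -> nat -> nat -> R) : Prop :=
  (forall eta xi, (eta < d)%nat -> (xi < d)%nat -> eta <> xi ->
     (forall N, RN N eta xi = 0) \/ (forall N, 0 < RN N eta xi)) /\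
  (forall m : nat, (1 <= m)%nat ->
     ordered_on
       (fun k : nat -> nat -> nat =>
          (forall eta xi, ~ Bset d RN eta xi -> k eta xi = O) /\ ksum d k = m)
       (fun k N => monomial d RN k N)).

Definition alpha (d : nat) (RN : nat -> nat -> nat -> R) (N : nat) : R :=
  / sumR d (fun eta => holding d (RN N) eta).

Definition Rlim (d : nat) (RN : nat -> nat -> nat -> R) (eta xi : nat) : R :=
  lim (fun N => alpha d RN N * RN N eta xi).

Definition recurrent (d : nat) (R0 : nat -> nat -> R) (eta : nat) : Prop :=
  (eta < d)%nat /\ forall xi, reach d R0 eta xi -> reach d R0 xi eta.

Definition rclass (d : nat) (R0 : nat -> nat -> R) (a : nat) : nat -> Prop :=
  fun eta => recurrent d R0 eta /\ reach d R0 a eta /\ reach d R0 eta a.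

Definition rbreve (d : nat) (R0 : nat -> nat -> R) (a : nat) : nat -> Prop :=
  fun eta => recurrent d R0 eta /\ ~ (reach d R0 a eta /\ reach d R0 eta a).

From Stdlib Require Import Reals Lra Lia Relations ClassicalEpsilon FunctionalExtensionality.
Open Scope R_scope.

(* Each ratio [Cap / mu] is a quotient [p / q] of polynomials in the rates with nonnegative
   coefficients, homogeneous of degrees [n + 1] and [n]. Indeed, hitting probabilities and
   (up to normalisation) the invariant measure can be computed by eliminating states one at a
   time, and eliminating [u] replaces the rates by [R(a,b) + R(a,u) R(u,b) / lambda(u)], which
   keeps them in this class. By Assumption A the monomials of a given degree are totally
   preordered by growth, so such a polynomial is asymptotic to a multiple of its dominant
   monomial, and the ratio of two such quotients of equal degree converges in [[0, +oo]]. *)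

Lemma sumR_ext n f g : (forall i, (i < n)%nat -> f i = g i) -> sumR n f = sumR n g.
Proof.
  induction n as [|n IH]; intros H; simpl; [reflexivity|].
  rewrite IH by (intros; apply H; lia). rewrite H by lia. reflexivity.
Qed.

Lemma sumR_plus n f g : sumR n (fun i => f i + g i) = sumR n f + sumR n g.
Proof. induction n; simpl; [lra|]. rewrite IHn. lra. Qed.

Lemma sumR_scal n c f : sumR n (fun i => c * f i) = c * sumR n f.
Proof. induction n; simpl; [lra|]. rewrite IHn. lra. Qed.

Lemma sumR_le n f g : (forall i, (i < n)%nat -> f i <= g i) -> sumR n f <= sumR n g.
Proof.
  induction n as [|n IH]; intros H; simpl; [lra|].
  assert (f n <= g n) by (apply H; lia).
  assert (sumR n f <= sumR n g) by (apply IH; intros; apply H; lia).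
  lra.
Qed.

Lemma sumR_nonneg n f : (forall i, (i < n)%nat -> 0 <= f i) -> 0 <= sumR n f.
Proof.
  intros H. replace 0 with (sumR n (fun _ => 0)).
  - now apply sumR_le.
  - clear H. induction n as [|n IH]; simpl; [reflexivity|]. rewrite IH. ring.
Qed.

Lemma sumR_remove n f u : (u < n)%nat ->
  sumR n f = sumR n (fun i => if Nat.eq_dec i u then 0 else f i) + f u.
Proof.
  induction n as [|n IH]; intros Hu; simpl; [lia|].
  destruct (Nat.eq_dec n u) as [<-|Hnu].
  - rewrite (sumR_ext n (fun i => if Nat.eq_dec i n then 0 else f i) f).
    + destruct (Nat.eq_dec n n); [lra|congruence].
    + intros i Hi. destruct (Nat.eq_dec i n); [lia|reflexivity].
  - rewrite IH by lia. destruct (Nat.eq_dec n u); [congruence|lra].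
Qed.

Lemma sumR_ge_term n f u : (u < n)%nat -> (forall i, (i < n)%nat -> 0 <= f i) ->
  f u <= sumR n f.
Proof.
  intros Hu H. rewrite (sumR_remove n f u Hu).
  assert (0 <= sumR n (fun i => if Nat.eq_dec i u then 0 else f i)); [|lra].
  apply sumR_nonneg. intros i Hi. destruct (Nat.eq_dec i u); [lra|auto].
Qed.

Lemma sumR_pos n f u : (u < n)%nat -> (forall i, (i < n)%nat -> 0 <= f i) -> 0 < f u ->
  0 < sumR n f.
Proof. intros Hu H Hf. pose proof (sumR_ge_term n f u Hu H). lra. Qed.

Lemma prodR_ext n f g : (forall i, (i < n)%nat -> f i = g i) -> prodR n f = prodR n g.
Proof.
  induction n as [|n IH]; intros H; simpl; [reflexivity|].
  rewrite IH by (intros; apply H; lia). rewrite H by lia. reflexivity.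
Qed.

Lemma prodR_mult n f g : prodR n (fun i => f i * g i) = prodR n f * prodR n g.
Proof. induction n; simpl; [lra|]. rewrite IHn. ring. Qed.

Lemma prodR_one n f : (forall i, (i < n)%nat -> f i = 1) -> prodR n f = 1.
Proof.
  induction n as [|n IH]; intros H; simpl; [reflexivity|].
  rewrite IH by (intros; apply H; lia). rewrite H by lia. ring.
Qed.

Lemma prodR_pos n f : (forall i, (i < n)%nat -> 0 < f i) -> 0 < prodR n f.
Proof.
  induction n as [|n IH]; intros H; simpl; [lra|].
  apply Rmult_lt_0_compat; [apply IH; intros|]; apply H; lia.
Qed.

Lemma prodR_single n f u : (u < n)%nat -> (forall i, (i < n)%nat -> i <> u -> f i = 1) ->
  prodR n f = f u.
Proof.
  induction n as [|n IH]; intros Hu H; simpl; [lia|].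
  destruct (Nat.eq_dec n u) as [<-|Hnu].
  - rewrite prodR_one by (intros; apply H; lia). ring.
  - rewrite IH, (H n) by (auto; lia). ring.
Qed.

Lemma sumN_ext n f g : (forall i, (i < n)%nat -> f i = g i) -> sumN n f = sumN n g.
Proof.
  induction n as [|n IH]; intros H; simpl; [reflexivity|].
  rewrite IH by (intros; apply H; lia). rewrite H by lia. reflexivity.
Qed.

Lemma sumN_plus n f g : sumN n (fun i => f i + g i)%nat = (sumN n f + sumN n g)%nat.
Proof. induction n; simpl; [lia|]. rewrite IHn. lia. Qed.

Lemma sumN_zero n f : (forall i, (i < n)%nat -> f i = 0%nat) -> sumN n f = 0%nat.
Proof.
  induction n as [|n IH]; intros H; simpl; [reflexivity|].
  rewrite IH by (intros; apply H; lia). rewrite H by lia. reflexivity.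
Qed.

Lemma sumN_single n f u : (u < n)%nat -> (forall i, (i < n)%nat -> i <> u -> f i = 0%nat) ->
  sumN n f = f u.
Proof.
  induction n as [|n IH]; intros Hu H; simpl; [lia|].
  destruct (Nat.eq_dec n u) as [<-|Hnu].
  - rewrite sumN_zero by (intros; apply H; lia). reflexivity.
  - rewrite IH, (H n) by (auto; lia). lia.
Qed.

Lemma sumN_eq0 n f : sumN n f = 0%nat -> forall i, (i < n)%nat -> f i = 0%nat.
Proof.
  induction n as [|n IH]; simpl; intros H i Hi; [lia|].
  destruct (Nat.eq_dec i n) as [->|]; [lia|]. apply IH; lia.
Qed.

Lemma sumN_pos n f : sumN n f <> 0%nat -> exists i, (i < n)%nat /\ f i <> 0%nat.
Proof.
  induction n as [|n IH]; simpl; intros H; [lia|].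
  destruct (Nat.eq_dec (f n) 0) as [Hn|Hn]; [|exists n; auto].
  destruct IH as (i & Hi & Hfi); [lia|]. exists i; split; [lia|auto].
Qed.

Lemma sumN_remove n f u : (u < n)%nat ->
  sumN n f = (sumN n (fun i => if Nat.eq_dec i u then 0 else f i) + f u)%nat.
Proof.
  induction n as [|n IH]; intros Hu; simpl; [lia|].
  destruct (Nat.eq_dec n u) as [<-|Hnu].
  - rewrite (sumN_ext n (fun i => if Nat.eq_dec i n then 0%nat else f i) f).
    + destruct (Nat.eq_dec n n); [lia|congruence].
    + intros i Hi. destruct (Nat.eq_dec i n); [lia|reflexivity].
  - rewrite IH by lia. destruct (Nat.eq_dec n u); [congruence|lia].
Qed.

Lemma Rdiv_nonneg a b : 0 <= a -> 0 <= b -> 0 <= a / b.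
Proof.
  intros Ha [Hb| <-]; [apply Rle_mult_inv_pos; assumption|].
  rewrite Rdiv_0_r. lra.
Qed.

Lemma decP_true (P : Prop) : decP P = true <-> P.
Proof. unfold decP. destruct (excluded_middle_informative P); split; auto; discriminate. Qed.

Lemma decP_false (P : Prop) : decP P = false <-> ~ P.
Proof.
  unfold decP. destruct (excluded_middle_informative P); split; auto; try discriminate; tauto.
Qed.

Lemma cv_const (c : R) : Un_cv (fun _ => c) c.
Proof. intros eps He. exists 0%nat. intros. unfold R_dist. rewrite Rminus_diag, Rabs_R0. lra. Qed.

Lemma cv_ext u v l : (forall N, u N = v N) -> Un_cv u l -> Un_cv v l.
Proof.
  intros E H eps He. destruct (H eps He) as [N0 HN]. exists N0. intros; rewrite <- E; auto.
Qed.

Lemma cv_div u v a b : Un_cv u a -> Un_cv v b -> b <> 0 -> Un_cv (fun N => u N / v N) (a / b).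
Proof.
  intros Hu Hv Hb. apply CV_mult; [exact Hu|].
  apply (continuity_seq (fun x => / x)); [|exact Hv].
  apply continuity_pt_inv; [apply derivable_continuous_pt, derivable_pt_id|exact Hb].
Qed.

Lemma cv_atan u l : Un_cv u l -> Un_cv (fun N => atan (u N)) (atan l).
Proof. intros. apply continuity_seq; auto. apply derivable_continuous_pt, derivable_pt_atan. Qed.

Lemma cv_sumR n (u : nat -> nat -> R) (l : nat -> R) :
  (forall i, (i < n)%nat -> Un_cv (fun k => u k i) (l i)) ->
  Un_cv (fun k => sumR n (u k)) (sumR n l).
Proof.
  induction n as [|n IH]; intros H; simpl; [apply cv_const|].
  apply CV_plus; [apply IH; intros|]; apply H; lia.
Qed.

Lemma lim_eq u l : Un_cv u l -> lim u = l.
Proof. intros H. apply (UL_sequence u); [unfold lim; apply epsilon_spec; exists l|]; exact H. Qed.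

Lemma cv_nonneg u l : (forall N, 0 <= u N) -> Un_cv u l -> 0 <= l.
Proof. intros H Hu. exact (Rle_cv_lim (Un := fun _ => 0) H (cv_const 0) Hu). Qed.

Lemma atan_cv_cases (x : nat -> R) l : (forall N, 0 < x N) -> Un_cv (fun N => atan (x N)) l ->
  (exists c, Un_cv x c) \/ Un_cv (fun N => / x N) 0.
Proof.
  intros Hx H. pose proof PI_RGT_0.
  assert (Hl1 : l <= PI / 2).
  { apply (Rle_cv_lim (Vn := fun _ => PI / 2) (fun N => Rlt_le _ _ (proj2 (atan_bound (x N)))) H).
    apply cv_const. }
  assert (Hl0 : 0 <= l).
  { apply (cv_nonneg (fun N => atan (x N))); [|exact H].
    intros N. rewrite <- atan_0. apply Rlt_le, atan_increasing, Hx. }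
  assert (Htan : forall v m, Un_cv (fun N => atan (v N)) m -> - (PI / 2) < m < PI / 2 ->
            Un_cv v (tan m)).
  { intros v m Hv Hm. apply (cv_ext (fun N => tan (atan (v N)))); [intros; apply tan_atan|].
    apply continuity_seq; [apply derivable_continuous_pt, derivable_pt_tan; lra|exact Hv]. }
  destruct Hl1 as [Hl1|Hl1].
  - left. exists (tan l). apply Htan; [exact H|lra].
  - right. rewrite <- tan_0. apply Htan; [|lra].
    apply (cv_ext (fun N => PI / 2 - atan (x N))); [intros; rewrite atan_inv; auto|].
    replace 0 with (PI / 2 - l) by lra. apply CV_minus; [apply cv_const|exact H].
Qed.

(** * Positive polynomials in the rates *)

Section RatePolynomials.

Variables (d : nat) (RN : nat -> nat -> nat -> R).

Definition admissible (m : nat) (k : nat -> nat -> nat) : Prop :=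
  (forall eta xi, ~ Bset d RN eta xi -> k eta xi = 0%nat) /\ ksum d k = m.

Lemma monomial_pos m k N : admissible m k -> 0 < monomial d RN k N.
Proof.
  intros [Hk _]. apply prodR_pos; intros eta Heta; apply prodR_pos; intros xi Hxi.
  destruct (classic (Bset d RN eta xi)) as [(_ & _ & _ & Hpos)|HB].
  - apply pow_lt, Hpos.
  - rewrite (Hk _ _ HB). simpl. lra.
Qed.

Lemma monomial_add k1 k2 N :
  monomial d RN (fun eta xi => (k1 eta xi + k2 eta xi)%nat) N
  = monomial d RN k1 N * monomial d RN k2 N.
Proof.
  unfold monomial. rewrite <- prodR_mult. apply prodR_ext; intros.
  rewrite <- prodR_mult. apply prodR_ext; intros. apply pow_add.
Qed.

Lemma admissible_add m1 m2 k1 k2 : admissible m1 k1 -> admissible m2 k2 ->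
  admissible (m1 + m2) (fun eta xi => (k1 eta xi + k2 eta xi)%nat).
Proof.
  intros [H1 S1] [H2 S2]. split.
  - intros eta xi HB. rewrite H1, H2 by exact HB. reflexivity.
  - unfold ksum in *. rewrite <- S1, <- S2, <- sumN_plus.
    apply sumN_ext; intros. apply sumN_plus.
Qed.

Lemma admissible0_monomial k N : admissible 0 k -> monomial d RN k N = 1.
Proof.
  intros [_ S]. apply prodR_one; intros eta Heta; apply prodR_one; intros xi Hxi.
  pose proof (sumN_eq0 _ _ S eta Heta) as Seta.
  rewrite (sumN_eq0 _ _ Seta xi Hxi). reflexivity.
Qed.

Lemma monomial_compare m k1 k2 : AssumptionA d RN -> admissible m k1 -> admissible m k2 ->
  (exists c, Un_cv (fun N => monomial d RN k1 N / monomial d RN k2 N) c) \/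
  Un_cv (fun N => monomial d RN k2 N / monomial d RN k1 N) 0.
Proof.
  intros [_ Hord] V1 V2.
  assert (Hpos : forall N, 0 < monomial d RN k1 N / monomial d RN k2 N)
    by (intros; apply Rdiv_lt_0_compat; eapply monomial_pos; eauto).
  assert (Hatan : exists l, Un_cv (fun N => atan (monomial d RN k1 N / monomial d RN k2 N)) l).
  { destruct (classic (k1 = k2)) as [<-|Hk].
    - exists (atan 1). apply (cv_ext (fun _ => atan 1)); [|apply cv_const].
      intros N. pose proof (monomial_pos _ _ N V1). f_equal. field. lra.
    - destruct m as [|m].
      + exists (atan 1). apply (cv_ext (fun _ => atan 1)); [|apply cv_const].
        intros N. rewrite !admissible0_monomial by assumption. f_equal. field.
      + apply (Hord (S m)); [lia|destruct V1|destruct V2|]; auto. }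
  destruct Hatan as [l Hl].
  destruct (atan_cv_cases _ _ Hpos Hl) as [Hc|Hinf]; [left; exact Hc|right].
  apply (cv_ext _ _ _ (fun N => Rinv_div _ _) Hinf).
Qed.

Inductive posPoly : nat -> (nat -> R) -> Prop :=
  | posPoly0 m : posPoly m (fun _ => 0)
  | posPolyM m c k : 0 <= c -> admissible m k -> posPoly m (fun N => c * monomial d RN k N)
  | posPolyD m f g : posPoly m f -> posPoly m g -> posPoly m (fun N => f N + g N).

Lemma posPoly_ext m f g : posPoly m f -> (forall N, f N = g N) -> posPoly m g.
Proof. intros Hf E. replace g with f; [exact Hf|]. extensionality N. apply E. Qed.

Lemma posPoly_one : posPoly 0 (fun _ => 1).
Proof.
  assert (V0 : admissible 0 (fun _ _ => 0%nat)).
  { split; [reflexivity|]. apply sumN_zero; intros. apply sumN_zero; reflexivity. }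
  apply (posPoly_ext _ _ _ (posPolyM 0 1 _ (Rle_0_1) V0)).
  intros N. rewrite admissible0_monomial by exact V0. ring.
Qed.

Lemma posPoly_mul m j f g : posPoly m f -> posPoly j g -> posPoly (m + j) (fun N => f N * g N).
Proof.
  intros Hf Hg. induction Hg as [j|j c k Hc Vk|j g1 g2 _ IH1 _ IH2].
  - apply (posPoly_ext _ _ _ (posPoly0 _)). intros; ring.
  - induction Hf as [m|m c' k' Hc' Vk'|m f1 f2 _ IH1 _ IH2].
    + apply (posPoly_ext _ _ _ (posPoly0 _)). intros; ring.
    + apply (posPoly_ext _ _ _ (posPolyM _ (c' * c) _ (Rmult_le_pos _ _ Hc' Hc)
                                       (admissible_add _ _ _ _ Vk' Vk))).
      intros N. rewrite monomial_add. ring.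
    + apply (posPoly_ext _ _ _ (posPolyD _ _ _ IH1 IH2)). intros; ring.
  - apply (posPoly_ext _ _ _ (posPolyD _ _ _ IH1 IH2)). intros; ring.
Qed.

Lemma posPoly_rate eta xi : AssumptionA d RN -> (eta < d)%nat -> (xi < d)%nat -> eta <> xi ->
  posPoly 1 (fun N => RN N eta xi).
Proof.
  intros [Hdich _] Heta Hxi Hne.
  destruct (classic (Bset d RN eta xi)) as [HB|HB].
  - set (k := fun a b => if (Nat.eqb a eta && Nat.eqb b xi)%bool then 1%nat else 0%nat).
    assert (Hrow : forall a, a <> eta -> forall b, k a b = 0%nat).
    { intros a Ha b. unfold k. destruct (Nat.eqb_spec a eta); [contradiction|reflexivity]. }
    assert (Hcol : forall b, b <> xi -> k eta b = 0%nat).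
    { intros b Hb. unfold k. rewrite Nat.eqb_refl.
      destruct (Nat.eqb_spec b xi); [contradiction|reflexivity]. }
    assert (Hk : k eta xi = 1%nat) by (unfold k; rewrite !Nat.eqb_refl; reflexivity).
    assert (Vk : admissible 1 k).
    { split.
      - intros a b Hab. destruct (Nat.eq_dec a eta) as [->|Ha]; [|apply Hrow, Ha].
        destruct (Nat.eq_dec b xi) as [->|Hb]; [contradiction|apply Hcol, Hb].
      - unfold ksum. rewrite (sumN_single _ _ eta Heta).
        + rewrite (sumN_single _ _ xi Hxi); [exact Hk|]. intros; apply Hcol; auto.
        + intros a _ Ha. apply sumN_zero. intros; apply Hrow, Ha. }
    apply (posPoly_ext _ _ _ (posPolyM _ 1 _ Rle_0_1 Vk)). intros N.
    unfold monomial. rewrite (prodR_single _ _ eta Heta).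
    + rewrite (prodR_single _ _ xi Hxi), Hk; [ring|].
      intros b _ Hb. rewrite Hcol by exact Hb. reflexivity.
    + intros a _ Ha. apply prodR_one. intros b _. rewrite Hrow by exact Ha. reflexivity.
  - destruct (Hdich eta xi Heta Hxi Hne) as [Hzero|Hpos].
    + apply (posPoly_ext _ _ _ (posPoly0 _)). intros; symmetry; apply Hzero.
    + exfalso. apply HB. repeat split; assumption.
Qed.

Definition monomial_like (m : nat) (f : nat -> R) : Prop :=
  (forall N, 0 < f N) /\
  exists k c, admissible m k /\ 0 < c /\ Un_cv (fun N => f N / monomial d RN k N) c.

(* Assumption A makes the monomials of a given degree totally preordered by growth, so a sum
   is dominated by its fastest-growing monomial. *)
Lemma posPoly_asymptotics m f : AssumptionA d RN -> posPoly m f ->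
  (forall N, f N = 0) \/ monomial_like m f.
Proof.
  intros HA Hf. induction Hf as [m|m c k Hc Vk|m f g _ IHf _ IHg].
  - left; reflexivity.
  - destruct (Req_dec c 0) as [->|Hc0]; [left; intros; ring|right].
    split; [intros N; apply Rmult_lt_0_compat; [lra|eapply monomial_pos; eauto]|].
    exists k, c. split; [assumption|split; [lra|]].
    apply (cv_ext (fun _ => c)); [|apply cv_const].
    intros N. pose proof (monomial_pos _ _ N Vk). field. lra.
  - destruct IHf as [Zf|[Pf (k1 & a & V1 & Ha & Hf)]].
    { destruct IHg as [Zg|Lg]; [left; intros N; rewrite Zf, Zg; ring|right].
      replace (fun N => f N + g N) with g; [exact Lg|].
      extensionality N. rewrite Zf. ring. }
    right. destruct IHg as [Zg|[Pg (k2 & b & V2 & Hb & Hg)]].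
    { replace (fun N => f N + g N) with f; [split; eauto|].
      extensionality N. rewrite Zg. ring. }
    split; [intros N; specialize (Pf N); specialize (Pg N); lra|].
    assert (M1 := fun N => monomial_pos _ _ N V1). assert (M2 := fun N => monomial_pos _ _ N V2).
    destruct (monomial_compare m k1 k2 HA V1 V2) as [[L HL]|H0].
    + assert (0 <= L).
      { apply (cv_nonneg _ _ (fun N => Rlt_le _ _ (Rdiv_lt_0_compat _ _ (M1 N) (M2 N))) HL). }
      exists k2, (a * L + b). split; [assumption|split; [nra|]].
      apply (cv_ext (fun N => f N / monomial d RN k1 N * (monomial d RN k1 N / monomial d RN k2 N)
                              + g N / monomial d RN k2 N)).
      * intros N. specialize (M1 N). specialize (M2 N). field. lra.
      * apply CV_plus; [apply CV_mult|]; assumption.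
    + exists k1, (a + b * 0). split; [assumption|split; [lra|]].
      apply (cv_ext (fun N => f N / monomial d RN k1 N
                              + g N / monomial d RN k2 N
                                * (monomial d RN k2 N / monomial d RN k1 N))).
      * intros N. specialize (M1 N). specialize (M2 N). field. lra.
      * apply CV_plus; [|apply CV_mult]; assumption.
Qed.

Lemma posPoly_dichotomy m f : AssumptionA d RN -> posPoly m f ->
  (forall N, f N = 0) \/ (forall N, 0 < f N).
Proof. intros HA Hf. destruct (posPoly_asymptotics m f HA Hf) as [Z|[P _]]; auto. Qed.

Lemma posPoly_ratio_cv m f g : AssumptionA d RN -> posPoly m f -> posPoly m g ->
  exists l, Un_cv (fun N => atan (f N / g N)) l.
Proof.
  intros HA Hf Hg.
  assert (Hzero : (forall N, f N / g N = 0) -> exists l, Un_cv (fun N => atan (f N / g N)) l).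
  { intros Z. exists (atan 0). apply (cv_ext (fun _ => atan 0)); [intros; rewrite Z; reflexivity|].
    apply cv_const. }
  destruct (posPoly_asymptotics m g HA Hg) as [Zg|[Pg (k2 & b & V2 & Hb & Cg)]].
  { apply Hzero. intros N. rewrite Zg. apply Rdiv_0_r. }
  destruct (posPoly_asymptotics m f HA Hf) as [Zf|[Pf (k1 & a & V1 & Ha & Cf)]].
  { apply Hzero. intros N. rewrite Zf. apply Rdiv_0_l. }
  assert (M1 := fun N => monomial_pos _ _ N V1). assert (M2 := fun N => monomial_pos _ _ N V2).
  destruct (monomial_compare m k1 k2 HA V1 V2) as [[L HL]|H0].
  - exists (atan (a * L / b)). apply cv_atan.
    apply (cv_ext (fun N => f N / monomial d RN k1 N * (monomial d RN k1 N / monomial d RN k2 N)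
                            / (g N / monomial d RN k2 N))).
    + intros N. specialize (M1 N). specialize (M2 N). specialize (Pg N). field. lra.
    + apply cv_div; [apply CV_mult| |lra]; assumption.
  - exists (PI / 2 - atan (b * 0 / a)).
    apply (cv_ext (fun N => PI / 2 - atan (g N / monomial d RN k2 N
                                          * (monomial d RN k2 N / monomial d RN k1 N)
                                          / (f N / monomial d RN k1 N)))).
    + intros N. specialize (M1 N). specialize (M2 N). specialize (Pf N). specialize (Pg N).
      replace (f N / g N) with (/ (g N / f N)) by (field; lra).
      rewrite atan_inv by (apply Rdiv_lt_0_compat; assumption).
      do 2 f_equal. field. lra.
    + apply CV_minus; [apply cv_const|apply cv_atan].
      apply cv_div; [apply CV_mult| |lra]; assumption.
Qed.

Definition homRat (k : nat) (f : nat -> R) : Prop :=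
  exists n p q, posPoly (n + k) p /\ posPoly n q /\ (forall N, 0 < q N) /\
                forall N, f N = p N / q N.

Lemma homRat_ext k f g : homRat k f -> (forall N, f N = g N) -> homRat k g.
Proof. intros Hf E. replace g with f; [exact Hf|]. extensionality N. apply E. Qed.

Lemma homRat_of_posPoly k f : posPoly k f -> homRat k f.
Proof.
  intros Hf. exists 0%nat, f, (fun _ => 1).
  repeat split; [exact Hf|exact posPoly_one|intros; lra|intros; field].
Qed.

Lemma homRat_zero k : homRat k (fun _ => 0).
Proof. apply homRat_of_posPoly, posPoly0. Qed.

Lemma homRat_add k f g : homRat k f -> homRat k g -> homRat k (fun N => f N + g N).
Proof.
  intros (n1 & p1 & q1 & P1 & Q1 & Q1p & E1) (n2 & p2 & q2 & P2 & Q2 & Q2p & E2).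
  exists (n1 + n2)%nat, (fun N => p1 N * q2 N + q1 N * p2 N), (fun N => q1 N * q2 N).
  repeat split.
  - apply posPolyD.
    + replace (n1 + n2 + k)%nat with (n1 + k + n2)%nat by lia. apply posPoly_mul; assumption.
    + rewrite <- Nat.add_assoc. apply posPoly_mul; assumption.
  - apply posPoly_mul; assumption.
  - intros N. apply Rmult_lt_0_compat; auto.
  - intros N. rewrite E1, E2. specialize (Q1p N). specialize (Q2p N). field. lra.
Qed.

Lemma homRat_sumR k n (F : nat -> nat -> R) : (forall i, (i < n)%nat -> homRat k (F i)) ->
  homRat k (fun N => sumR n (fun i => F i N)).
Proof.
  induction n as [|n IH]; intros H; simpl.
  - apply homRat_zero.
  - apply homRat_add; [apply IH; intros|]; apply H; lia.
Qed.

Lemma homRat_mul k j f g : homRat k f -> homRat j g -> homRat (k + j) (fun N => f N * g N).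
Proof.
  intros (n1 & p1 & q1 & P1 & Q1 & Q1p & E1) (n2 & p2 & q2 & P2 & Q2 & Q2p & E2).
  exists (n1 + n2)%nat, (fun N => p1 N * p2 N), (fun N => q1 N * q2 N).
  repeat split.
  - replace (n1 + n2 + (k + j))%nat with (n1 + k + (n2 + j))%nat by lia.
    apply posPoly_mul; assumption.
  - apply posPoly_mul; assumption.
  - intros N. apply Rmult_lt_0_compat; auto.
  - intros N. rewrite E1, E2. specialize (Q1p N). specialize (Q2p N). field. lra.
Qed.

Lemma homRat_div k j f g : AssumptionA d RN -> homRat (k + j) f -> homRat j g ->
  (forall N, 0 < g N) -> homRat k (fun N => f N / g N).
Proof.
  intros HA (n1 & p1 & q1 & P1 & Q1 & Q1p & E1) (n2 & p2 & q2 & P2 & Q2 & Q2p & E2) Gp.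
  assert (P2p : forall N, 0 < p2 N).
  { destruct (posPoly_dichotomy _ _ HA P2) as [Z|Pos]; [|exact Pos].
    intros N. specialize (Gp N). rewrite E2, Z, Rdiv_0_l in Gp. lra. }
  exists (n1 + n2 + j)%nat, (fun N => p1 N * q2 N), (fun N => q1 N * p2 N).
  repeat split.
  - replace (n1 + n2 + j + k)%nat with (n1 + (k + j) + n2)%nat by lia.
    apply posPoly_mul; assumption.
  - rewrite <- Nat.add_assoc. apply posPoly_mul; assumption.
  - intros N. apply Rmult_lt_0_compat; auto.
  - intros N. rewrite E1, E2. specialize (Q1p N). specialize (Q2p N). specialize (P2p N).
    field. lra.
Qed.

Lemma homRat_ratio_cv k f g : AssumptionA d RN -> homRat k f -> homRat k g ->
  exists l, Un_cv (fun N => atan (f N / g N)) l.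
Proof.
  intros HA (n1 & p1 & q1 & P1 & Q1 & Q1p & E1) (n2 & p2 & q2 & P2 & Q2 & Q2p & E2).
  destruct (posPoly_ratio_cv (n1 + k + n2) (fun N => p1 N * q2 N) (fun N => q1 N * p2 N) HA)
    as [l Hl].
  - apply posPoly_mul; assumption.
  - replace (n1 + k + n2)%nat with (n1 + (n2 + k))%nat by lia. apply posPoly_mul; assumption.
  - exists l. refine (cv_ext _ _ _ _ Hl). intros N. rewrite E1, E2. f_equal.
    specialize (Q1p N). specialize (Q2p N).
    destruct (Req_dec (p2 N) 0) as [->|Hp2].
    + rewrite Rmult_0_r, Rdiv_0_l, !Rdiv_0_r. reflexivity.
    + field. repeat split; lra.
Qed.

End RatePolynomials.

(** * Elimination of a state *)

Section StateElimination.

Variable d : nat.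

Implicit Types (s : nat -> bool) (q : nat -> nat -> R).

Definition mem s (x : nat) : Prop := (x < d)%nat /\ s x = true.

Definition sremove s (u : nat) : nat -> bool := fun x => (s x && negb (x =? u))%bool.

Definition restrict s (F : nat -> R) : R := sumR d (fun x => if s x then F x else 0).

Definition out_rate s q (z : nat) : R := restrict (sremove s z) (q z).

(* Rates of the chain watched on [s] minus [u]: a jump into [u] is followed through [u]
   to the first state it leaves [u] for. *)
Definition trace s q (u : nat) : nat -> nat -> R :=
  fun a b => q a b + q a u * q u b / out_rate s q u.

Definition nonneg_on s q : Prop :=
  forall a b, mem s a -> mem s b -> a <> b -> 0 <= q a b.

Definition edge_in s q (a b : nat) : Prop := mem s a /\ mem s b /\ a <> b /\ 0 < q a b.

Definition connected s q : Prop :=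
  forall a b, mem s a -> mem s b -> clos_refl_trans nat (edge_in s q) a b.

Definition harmonic_on s q (A B : nat -> bool) (h : nat -> R) : Prop :=
  forall z, mem s z -> A z = false -> B z = false ->
    out_rate s q z * h z = restrict (sremove s z) (fun w => q z w * h w).

Definition invariant_on s q (m : nat -> R) : Prop :=
  forall x, mem s x -> restrict (sremove s x) (fun y => m y * q y x) = m x * out_rate s q x.

Lemma sremove_spec s u x : sremove s u x = if Nat.eq_dec x u then false else s x.
Proof.
  unfold sremove. destruct (Nat.eq_dec x u) as [->|Hxu].
  - rewrite Nat.eqb_refl, Bool.andb_false_r. reflexivity.
  - apply Nat.eqb_neq in Hxu. rewrite Hxu, Bool.andb_true_r. reflexivity.
Qed.

Lemma mem_sremove s u x : mem (sremove s u) x <-> mem s x /\ x <> u.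
Proof.
  unfold mem, sremove. rewrite Bool.andb_true_iff, Bool.negb_true_iff, Nat.eqb_neq. tauto.
Qed.

Lemma restrict_ext s s' F G : (forall x, (x < d)%nat -> s x = s' x) ->
  (forall x, mem s x -> F x = G x) -> restrict s F = restrict s' G.
Proof.
  intros Hs HF. apply sumR_ext. intros x Hx. rewrite <- Hs by exact Hx.
  destruct (s x) eqn:E; [apply HF; split|]; auto.
Qed.

Lemma restrict_linear s F G c :
  restrict s (fun x => F x + c * G x) = restrict s F + c * restrict s G.
Proof.
  unfold restrict. rewrite <- sumR_scal, <- sumR_plus. apply sumR_ext. intros.
  destruct (s i); ring.
Qed.

Lemma restrict_remove s F u : mem s u -> restrict s F = restrict (sremove s u) F + F u.
Proof.
  intros [Hu Hsu]. unfold restrict. rewrite (sumR_remove _ _ u Hu), Hsu. f_equal.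
  apply sumR_ext. intros x _. rewrite sremove_spec. destruct (Nat.eq_dec x u); reflexivity.
Qed.

Lemma restrict_remove2 s F u z : mem s u -> u <> z ->
  restrict (sremove s z) F = restrict (sremove (sremove s u) z) F + F u.
Proof.
  intros Hu Huz. rewrite (restrict_remove _ F u) by (apply mem_sremove; auto). f_equal.
  apply restrict_ext; [|reflexivity]. intros x _. unfold sremove.
  destruct (s x), (x =? u), (x =? z); reflexivity.
Qed.

Definition count s : nat := sumN d (fun x => if s x then 1%nat else 0%nat).

Lemma count_ext s s' : (forall x, (x < d)%nat -> s x = s' x) -> count s = count s'.
Proof. intros H. apply sumN_ext. intros x Hx. rewrite H by exact Hx. reflexivity. Qed.

Lemma count_sremove s u : mem s u -> count s = S (count (sremove s u)).
Proof.
  intros [Hu Hsu]. unfold count. rewrite (sumN_remove _ _ u Hu), Hsu, Nat.add_1_r. f_equal.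
  apply sumN_ext. intros x _. rewrite sremove_spec. destruct (Nat.eq_dec x u); reflexivity.
Qed.

Lemma count_zero s x : count s = 0%nat -> ~ mem s x.
Proof.
  intros H [Hx Hsx]. pose proof (sumN_eq0 _ _ H x Hx) as E. cbv beta in E.
  rewrite Hsx in E. discriminate.
Qed.

Lemma count_pos s : count s <> 0%nat -> exists u, mem s u.
Proof.
  intros H. destruct (sumN_pos _ _ H) as (u & Hu & E).
  exists u. split; [exact Hu|]. destruct (s u); [reflexivity|contradiction].
Qed.

Definition interior s (A B : nat -> bool) : nat -> bool :=
  fun x => (s x && negb (A x) && negb (B x))%bool.

Lemma mem_interior s A B x : mem (interior s A B) x <-> mem s x /\ A x = false /\ B x = false.
Proof.
  unfold mem, interior. rewrite !Bool.andb_true_iff, !Bool.negb_true_iff. tauto.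
Qed.

Section Rates.

Variables (s : nat -> bool) (q : nat -> nat -> R).
Hypothesis q_nonneg : nonneg_on s q.

Lemma out_rate_terms_nonneg z x : mem s z -> (x < d)%nat ->
  0 <= (if sremove s z x then q z x else 0).
Proof.
  intros Hz Hx. destruct (sremove s z x) eqn:E; [|lra].
  assert (mem s x /\ x <> z) as [Hx' Hxz] by (apply mem_sremove; split; auto).
  apply q_nonneg; auto.
Qed.

Lemma out_rate_nonneg z : mem s z -> 0 <= out_rate s q z.
Proof. intros Hz. apply sumR_nonneg. intros; apply out_rate_terms_nonneg; assumption. Qed.

Lemma out_rate_ge z b : mem s z -> mem s b -> b <> z -> q z b <= out_rate s q z.
Proof.
  intros Hz Hb Hbz. unfold out_rate, restrict.
  refine (Rle_trans _ _ _ _ (sumR_ge_term _ _ b (proj1 Hb) _)).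
  - assert (mem (sremove s z) b) as [_ ->] by (apply mem_sremove; auto). lra.
  - intros; apply out_rate_terms_nonneg; assumption.
Qed.

Lemma out_rate_pos u v : connected s q -> mem s u -> mem s v -> u <> v -> 0 < out_rate s q u.
Proof.
  intros Hc Hu Hv Huv. pose proof (Hc u v Hu Hv) as Hp. apply clos_rt_rt1n_iff in Hp.
  destruct Hp as [|x y (_ & Hx & Hux & Hq) _]; [contradiction|].
  pose proof (out_rate_ge u x Hu Hx (not_eq_sym Hux)). lra.
Qed.

Lemma trace_ge u a b : mem s u -> mem s a -> mem s b -> a <> u -> b <> u -> a <> b ->
  q a b <= trace s q u a b /\ q a u * q u b / out_rate s q u <= trace s q u a b.
Proof.
  intros Hu Ha Hb Hau Hbu Hab. unfold trace.
  assert (0 <= q a u * q u b / out_rate s q u).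
  { apply Rdiv_nonneg; [apply Rmult_le_pos; apply q_nonneg; auto|apply out_rate_nonneg, Hu]. }
  assert (0 <= q a b) by (apply q_nonneg; auto).
  lra.
Qed.

Lemma nonneg_trace u : mem s u -> nonneg_on (sremove s u) (trace s q u).
Proof.
  intros Hu a b Ha Hb Hab. apply mem_sremove in Ha as [Ha Hau]. apply mem_sremove in Hb as [Hb Hbu].
  destruct (trace_ge u a b) as [H _]; auto. pose proof (q_nonneg a b Ha Hb Hab). lra.
Qed.

Lemma trace_edge u a b : mem s u -> edge_in s q a b -> a <> u -> b <> u ->
  edge_in (sremove s u) (trace s q u) a b.
Proof.
  intros Hu (Ha & Hb & Hab & Hq) Hau Hbu.
  unfold edge_in. rewrite !mem_sremove. do 3 (split; [auto|]).
  destruct (trace_ge u a b) as [H _]; auto. lra.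
Qed.

Lemma trace_edge_via u a b : edge_in s q a u -> edge_in s q u b -> a <> b ->
  edge_in (sremove s u) (trace s q u) a b.
Proof.
  intros (Ha & Hu & Hau & Hq1) (_ & Hb & Hub & Hq2) Hab.
  unfold edge_in. rewrite !mem_sremove. do 3 (split; [auto|]).
  destruct (trace_ge u a b) as [_ H]; auto.
  assert (0 < q a u * q u b / out_rate s q u); [|lra].
  pose proof (out_rate_ge u b Hu Hb (not_eq_sym Hub)).
  apply Rdiv_lt_0_compat; [apply Rmult_lt_0_compat|]; lra.
Qed.

(* A path of [q] avoiding [u] at its ends becomes a path of the trace rates by shortcutting
   every visit to [u]; we track paths ending at [u] through their last state before [u]. *)
Lemma trace_path u x y : mem s u -> x <> u -> clos_refl_trans_n1 nat (edge_in s q) x y ->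
  (y <> u -> clos_refl_trans nat (edge_in (sremove s u) (trace s q u)) x y) /\
  (y = u -> exists v, v <> u /\ edge_in s q v u /\
                      clos_refl_trans nat (edge_in (sremove s u) (trace s q u)) x v).
Proof.
  intros Hu Hxu. induction 1 as [|y z Eyz _ [IHy IHu]].
  - split; [intros; apply rt_refl|congruence].
  - destruct (Nat.eq_dec y u) as [->|Hyu].
    + destruct (IHu eq_refl) as (v & Hvu & Evu & Pv). pose proof Eyz as (_ & _ & Huz & _).
      split; [intros Hzu|congruence].
      destruct (Nat.eq_dec v z) as [<-|Hvz]; [exact Pv|].
      apply rt_trans with v; [exact Pv|apply rt_step, trace_edge_via; assumption].
    + split.
      * intros Hzu. apply rt_trans with y; [apply IHy, Hyu|apply rt_step, trace_edge; assumption].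
      * intros ->. exists y. auto.
Qed.

Lemma connected_trace u : mem s u -> connected s q -> connected (sremove s u) (trace s q u).
Proof.
  intros Hu Hc a b Ha Hb. apply mem_sremove in Ha as [Ha Hau]. apply mem_sremove in Hb as [Hb Hbu].
  apply (trace_path u a b Hu Hau); [|exact Hbu]. apply clos_rt_rtn1, Hc; assumption.
Qed.

End Rates.

Lemma trace_row_sum s q u z (g : nat -> R) : mem s u -> mem s z -> z <> u ->
  restrict (sremove (sremove s u) z) (fun w => trace s q u z w * g w)
  = restrict (sremove s z) (fun w => q z w * g w) - q z u * g u
    + q z u / out_rate s q u * (restrict (sremove s u) (fun w => q u w * g w) - q u z * g z).
Proof.
  intros Hu Hz Hzu.
  unfold trace at 1.
  replace (fun w => (q z w + q z u * q u w / out_rate s q u) * g w)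
    with (fun w => q z w * g w + q z u / out_rate s q u * (q u w * g w))
    by (extensionality w; unfold Rdiv; ring).
  rewrite restrict_linear, (restrict_remove2 s _ u z Hu (not_eq_sym Hzu)).
  rewrite (restrict_remove (sremove s u) _ z) by (apply mem_sremove; auto).
  ring.
Qed.

Lemma trace_col_sum s q u z (m : nat -> R) : mem s u -> mem s z -> z <> u ->
  restrict (sremove (sremove s u) z) (fun w => m w * trace s q u w z)
  = restrict (sremove s z) (fun w => m w * q w z) - m u * q u z
    + q u z / out_rate s q u * (restrict (sremove s u) (fun w => m w * q w u) - m z * q z u).
Proof.
  intros Hu Hz Hzu.
  unfold trace at 1.
  replace (fun w => m w * (q w z + q w u * q u z / out_rate s q u))
    with (fun w => m w * q w z + q u z / out_rate s q u * (m w * q w u))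
    by (extensionality w; unfold Rdiv; ring).
  rewrite restrict_linear, (restrict_remove2 s _ u z Hu (not_eq_sym Hzu)).
  rewrite (restrict_remove (sremove s u) _ z) by (apply mem_sremove; auto).
  ring.
Qed.

Lemma out_rate_trace s q u z : mem s u -> mem s z -> z <> u -> out_rate s q u <> 0 ->
  out_rate (sremove s u) (trace s q u) z = out_rate s q z - q z u * q u z / out_rate s q u.
Proof.
  intros Hu Hz Hzu Hl.
  transitivity (restrict (sremove (sremove s u) z) (fun w => trace s q u z w * 1)).
  { apply restrict_ext; intros; [reflexivity|ring]. }
  rewrite trace_row_sum by assumption.
  replace (fun w => q z w * 1) with (q z) by (extensionality w; ring).
  replace (fun w => q u w * 1) with (q u) by (extensionality w; ring).
  fold (out_rate s q z) (out_rate s q u). field. exact Hl.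
Qed.

Lemma harmonic_trace s q A B h u : mem s u -> A u = false -> B u = false ->
  out_rate s q u <> 0 -> harmonic_on s q A B h ->
  harmonic_on (sremove s u) (trace s q u) A B h.
Proof.
  intros Hu HAu HBu Hl Hh z Hz HAz HBz. apply mem_sremove in Hz as [Hz Hzu].
  rewrite out_rate_trace, trace_row_sum by assumption.
  rewrite <- (Hh z Hz HAz HBz), <- (Hh u Hu HAu HBu). field. exact Hl.
Qed.

Lemma invariant_trace s q m u : mem s u -> out_rate s q u <> 0 -> invariant_on s q m ->
  invariant_on (sremove s u) (trace s q u) m.
Proof.
  intros Hu Hl Hm z Hz. apply mem_sremove in Hz as [Hz Hzu].
  rewrite out_rate_trace, trace_col_sum by assumption.
  rewrite (Hm z Hz), (Hm u Hu). field. exact Hl.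
Qed.

(* The weight of [u] is forced by the balance equation at [u]. *)
Definition extend_weights s q (w : nat -> R) (u : nat) : nat -> R :=
  fun z => if z =? u then restrict (sremove s u) (fun y => w y * q y u) / out_rate s q u else w z.

Lemma extend_weights_other s q w u z : z <> u -> extend_weights s q w u z = w z.
Proof. intros Hzu. unfold extend_weights. apply Nat.eqb_neq in Hzu. rewrite Hzu. reflexivity. Qed.

Lemma extend_weights_proportional s q m w u :
  mem s u -> out_rate s q u <> 0 -> invariant_on s q m ->
  (forall x y, mem (sremove s u) x -> mem (sremove s u) y -> m x * w y = m y * w x) ->
  forall x y, mem s x -> mem s y -> m x * extend_weights s q w u y = m y * extend_weights s q w u x.
Proof.
  intros Hu Hl Hm Hw.
  assert (Hx_u : forall x, mem s x -> x <> u -> m x * extend_weights s q w u u = m u * w x).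
  { intros x Hx Hxu. unfold extend_weights. rewrite Nat.eqb_refl.
    assert (E : m x * restrict (sremove s u) (fun y => w y * q y u)
                = w x * restrict (sremove s u) (fun y => m y * q y u)).
    { unfold restrict. rewrite <- !sumR_scal. apply sumR_ext. intros y Hy.
      destruct (sremove s u y) eqn:Ey; [|ring].
      rewrite <- Rmult_assoc, (Hw x y); [ring|apply mem_sremove; auto|split; assumption]. }
    unfold Rdiv. rewrite <- Rmult_assoc, E, (Hm u Hu). field. exact Hl. }
  intros x y Hx Hy.
  destruct (Nat.eq_dec x u) as [->|Hxu], (Nat.eq_dec y u) as [->|Hyu].
  - reflexivity.
  - rewrite (Hx_u y Hy Hyu), extend_weights_other by exact Hyu. ring.
  - rewrite (Hx_u x Hx Hxu), extend_weights_other by exact Hxu. ring.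
  - rewrite !extend_weights_other by assumption. apply Hw; apply mem_sremove; auto.
Qed.

Lemma extend_weights_pos s q w u v : nonneg_on s q -> connected s q -> mem s u -> mem s v ->
  u <> v -> (forall x, mem (sremove s u) x -> 0 < w x) ->
  forall z, mem s z -> 0 < extend_weights s q w u z.
Proof.
  intros Hnn Hc Hu Hv Huv Hw z Hz.
  destruct (Nat.eq_dec z u) as [->|Hzu];
    [|rewrite extend_weights_other by exact Hzu; apply Hw, mem_sremove; auto].
  unfold extend_weights. rewrite Nat.eqb_refl.
  apply Rdiv_lt_0_compat; [|apply (out_rate_pos s q Hnn u v); auto].
  assert (Hin : exists y, mem s y /\ y <> u /\ 0 < q y u).
  { pose proof (clos_rt_rtn1 _ _ _ _ (Hc v u Hv Hu)) as Hp.
    inversion Hp as [|y u' (Hy & _ & Hyu & Hq)]; [congruence|eauto]. }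
  destruct Hin as (y & Hy & Hyu & Hq).
  assert (Hy' : mem (sremove s u) y) by (apply mem_sremove; auto).
  apply (sumR_pos _ _ y (proj1 Hy)).
  - intros x Hx. destruct (sremove s u x) eqn:Ex; [|lra].
    assert (mem s x /\ x <> u) as [Hx' Hxu] by (apply mem_sremove; split; assumption).
    apply Rmult_le_pos; [apply Rlt_le, Hw; split; assumption|apply Hnn; auto].
  - rewrite (proj2 Hy'). apply Rmult_lt_0_compat; [apply Hw, Hy'|exact Hq].
Qed.

End StateElimination.

Section Families.

Variables (d : nat) (RN : nat -> nat -> nat -> R).
Hypothesis HA : AssumptionA d RN.

Implicit Types (s : nat -> bool) (Q : nat -> nat -> nat -> R).

Lemma homRat_restrict k s (F : nat -> nat -> R) :
  (forall x, mem d s x -> homRat d RN k (fun N => F N x)) ->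
  homRat d RN k (fun N => restrict d s (F N)).
Proof.
  intros H. apply homRat_sumR. intros x Hx.
  destruct (s x) eqn:E; [apply H; split; assumption|apply homRat_zero].
Qed.

Definition regular_rates s Q : Prop :=
  (forall N, nonneg_on d s (Q N)) /\ (forall N, connected d s (Q N)) /\
  (forall a b, mem d s a -> mem d s b -> a <> b -> homRat d RN 1 (fun N => Q N a b)).

Lemma homRat_out_rate s Q z : regular_rates s Q -> mem d s z ->
  homRat d RN 1 (fun N => out_rate d s (Q N) z).
Proof.
  intros (_ & _ & HQ) Hz. apply homRat_restrict. intros x Hx.
  apply mem_sremove in Hx as [Hx Hxz]. apply HQ; auto.
Qed.

Lemma regular_rates_trace s Q u v : regular_rates s Q -> mem d s u -> mem d s v -> u <> v ->
  regular_rates (sremove s u) (fun N => trace d s (Q N) u).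
Proof.
  intros HR Hu Hv Huv. pose proof HR as (Hnn & Hc & HQ).
  split; [|split].
  - intros N. apply nonneg_trace; auto.
  - intros N. apply connected_trace; auto.
  - intros a b Ha Hb Hab. apply mem_sremove in Ha as [Ha Hau]. apply mem_sremove in Hb as [Hb Hbu].
    apply homRat_add; [apply HQ; auto|].
    apply (homRat_div d RN 1 1); [exact HA| |apply homRat_out_rate; auto|].
    + apply homRat_mul; apply HQ; auto.
    + intros N. apply (out_rate_pos d s (Q N) (Hnn N) u v); auto.
Qed.

(* Eliminating the interior states one at a time only adds, multiplies and divides
   rational functions with positive coefficients. *)
Lemma harmonic_homRat (A B : nat -> bool) (h : nat -> nat -> R) :
  (forall N x, B x = true -> h N x = 1) -> (forall N x, A x = true -> B x = false -> h N x = 0) ->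
  forall n s Q, count d (interior s A B) = n -> regular_rates s Q ->
  (exists a, mem d s a /\ A a = true) -> (forall N, harmonic_on d s (Q N) A B (h N)) ->
  forall z, mem d s z -> homRat d RN 0 (fun N => h N z).
Proof.
  intros hB hA n. induction n as [|n IH]; intros s Q Hn HR (a & Ha & HAa) Hh z Hz.
  - destruct (B z) eqn:EB.
    + apply (homRat_ext d RN 0 (fun _ => 1)); [apply homRat_of_posPoly, posPoly_one|].
      intros N. symmetry. apply hB, EB.
    + destruct (A z) eqn:EA.
      * apply (homRat_ext d RN 0 (fun _ => 0)); [apply homRat_zero|].
        intros N. symmetry. apply hA; assumption.
      * exfalso. apply (count_zero d _ z Hn). split; [apply Hz|].
        unfold interior. rewrite (proj2 Hz), EA, EB. reflexivity.
  - destruct (count_pos d (interior s A B)) as (u & Hu); [lia|].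
    apply mem_interior in Hu as (Hu & HAu & HBu).
    assert (Hau : a <> u) by congruence.
    assert (Hpos : forall N, 0 < out_rate d s (Q N) u).
    { intros N. destruct HR as (Hnn & Hc & _). apply (out_rate_pos d s (Q N) (Hnn N) u a); auto. }
    assert (IHu : forall z, mem d (sremove s u) z -> homRat d RN 0 (fun N => h N z)).
    { apply (IH (sremove s u) (fun N => trace d s (Q N) u)).
      - rewrite (count_sremove d (interior s A B) u) in Hn by (apply mem_interior; auto).
        injection Hn as <-. apply count_ext. intros x _.
        unfold interior, sremove. destruct (s x), (A x), (B x), (x =? u); reflexivity.
      - apply (regular_rates_trace s Q u a); auto.
      - exists a. split; [apply mem_sremove|]; auto.
      - intros N. apply harmonic_trace; auto. specialize (Hpos N). lra. }
    destruct (Nat.eq_dec z u) as [->|Hzu]; [|apply IHu, mem_sremove; auto].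
    apply (homRat_ext d RN 0
             (fun N => restrict d (sremove s u) (fun w => Q N u w * h N w) / out_rate d s (Q N) u)).
    + apply (homRat_div d RN 0 1); [exact HA| |apply homRat_out_rate; auto|exact Hpos].
      apply homRat_restrict. intros w Hw. apply (homRat_mul d RN 1 0); [|apply IHu, Hw].
      apply mem_sremove in Hw as [Hw Hwu]. apply HR; auto.
    + intros N. rewrite <- (Hh N u Hu HAu HBu). specialize (Hpos N). field. lra.
Qed.

Definition invariant_weights (s : nat -> bool) (mu w : nat -> nat -> R) : Prop :=
  (forall z, mem d s z -> homRat d RN 0 (fun N => w N z)) /\
  (forall N z, mem d s z -> 0 < w N z) /\
  (forall N x y, mem d s x -> mem d s y -> mu N x * w N y = mu N y * w N x).

Lemma invariant_weights_single s mu : ~ (exists u v, mem d s u /\ mem d s v /\ u <> v) ->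
  invariant_weights s mu (fun _ _ => 1).
Proof.
  intros Hs. split; [|split].
  - intros. apply homRat_of_posPoly, posPoly_one.
  - intros. lra.
  - intros N x y Hx Hy. destruct (Nat.eq_dec x y) as [<-|Hxy]; [reflexivity|].
    exfalso. apply Hs. exists x, y. auto.
Qed.

Lemma invariant_weights_exist (mu : nat -> nat -> R) : forall n s Q, count d s = n ->
  regular_rates s Q -> (forall N, invariant_on d s (Q N) (mu N)) ->
  exists w, invariant_weights s mu w.
Proof.
  intros n. induction n as [|n IH]; intros s Q Hn HR Hinv;
    destruct (classic (exists u v, mem d s u /\ mem d s v /\ u <> v))
      as [(u & v & Hu & Hv & Huv)|Hsingle];
    try (exists (fun _ _ => 1); apply invariant_weights_single, Hsingle).
  - exfalso. exact (count_zero d s u Hn Hu).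
  - pose proof HR as (Hnn & Hc & HQ).
    assert (Hpos : forall N, 0 < out_rate d s (Q N) u)
      by (intros N; apply (out_rate_pos d s (Q N) (Hnn N) u v); auto).
    destruct (IH (sremove s u) (fun N => trace d s (Q N) u)) as (w & Wrat & Wpos & Wprop).
    + rewrite (count_sremove d s u Hu) in Hn. lia.
    + apply (regular_rates_trace s Q u v); auto.
    + intros N. apply invariant_trace; auto. specialize (Hpos N). lra.
    + exists (fun N => extend_weights d s (Q N) (w N) u). split; [|split].
      * intros z Hz. destruct (Nat.eq_dec z u) as [Hzu|Hzu].
        -- subst z. unfold extend_weights. rewrite Nat.eqb_refl.
           apply (homRat_div d RN 0 1); [exact HA| |apply homRat_out_rate; auto|exact Hpos].
           apply homRat_restrict. intros y Hy. apply (homRat_mul d RN 0 1); [apply Wrat, Hy|].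
           apply mem_sremove in Hy as [Hy Hyu]. apply HQ; auto.
        -- apply (homRat_ext d RN 0 (fun N => w N z)); [apply Wrat, mem_sremove; auto|].
           intros N. symmetry. apply extend_weights_other, Hzu.
      * intros N. apply (extend_weights_pos d s (Q N) (w N) u v); auto.
      * intros N. apply extend_weights_proportional; auto. specialize (Hpos N). lra.
Qed.

End Families.

(** * Hitting probabilities *)

Section HittingProbabilities.

Variables (d : nat) (R0 : nat -> nat -> R) (A B : nat -> Prop).
Hypothesis holding_pos : forall z, (z < d)%nat -> 0 < holding d R0 z.
Hypothesis rates_nonneg : forall z x, (z < d)%nat -> (x < d)%nat -> z <> x -> 0 <= R0 z x.

Lemma holding_jumpP z x : (z < d)%nat ->
  holding d R0 z * jumpP d R0 z x = if Nat.eq_dec x z then 0 else R0 z x.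
Proof.
  intros Hz. pose proof (holding_pos z Hz). unfold jumpP.
  destruct (Nat.eq_dec x z); [ring|field; lra].
Qed.

Lemma jumpP_nonneg z x : (z < d)%nat -> (x < d)%nat -> 0 <= jumpP d R0 z x.
Proof.
  intros Hz Hx. unfold jumpP. destruct (Nat.eq_dec x z); [lra|].
  apply Rdiv_nonneg; [apply rates_nonneg; auto|apply Rlt_le, holding_pos, Hz].
Qed.

Lemma jumpP_sum z : (z < d)%nat -> sumR d (jumpP d R0 z) = 1.
Proof.
  intros Hz. pose proof (holding_pos z Hz).
  apply (Rmult_eq_reg_l (holding d R0 z)); [|lra].
  rewrite <- sumR_scal, Rmult_1_r. unfold holding. apply sumR_ext. intros x _.
  apply holding_jumpP, Hz.
Qed.

Lemma hit_within_S n z : hit_within d R0 A B (S n) z =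
  if decP (B z) then 1 else if decP (A z) then 0
  else sumR d (fun w => jumpP d R0 z w * hit_within d R0 A B n w).
Proof. reflexivity. Qed.

Lemma hit_within_bounds n z : (z < d)%nat -> 0 <= hit_within d R0 A B n z <= 1.
Proof.
  revert z. induction n as [|n IH]; intros z Hz; simpl.
  - destruct (decP (B z)), (decP (A z)); lra.
  - destruct (decP (B z)), (decP (A z)); try lra. split.
    + apply sumR_nonneg. intros x Hx.
      apply Rmult_le_pos; [apply jumpP_nonneg|apply IH]; assumption.
    + rewrite <- (jumpP_sum z Hz). apply sumR_le. intros x Hx.
      pose proof (IH x Hx). pose proof (jumpP_nonneg z x Hz Hx). nra.
Qed.

Lemma hit_within_mono n z : (z < d)%nat ->
  hit_within d R0 A B n z <= hit_within d R0 A B (S n) z.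
Proof.
  revert z. induction n as [|n IH]; intros z Hz; rewrite hit_within_S; simpl.
  - destruct (decP (B z)), (decP (A z)); try lra.
    apply sumR_nonneg. intros x Hx.
    apply Rmult_le_pos; [apply jumpP_nonneg; assumption|exact (proj1 (hit_within_bounds 0 x Hx))].
  - destruct (decP (B z)), (decP (A z)); try lra.
    apply sumR_le. intros x Hx. apply Rmult_le_compat_l; [apply jumpP_nonneg|apply IH]; assumption.
Qed.

Definition hit_prob (z : nat) : R := lim (fun n => hit_within d R0 A B n z).

Lemma hit_within_cv z : (z < d)%nat -> Un_cv (fun n => hit_within d R0 A B n z) (hit_prob z).
Proof.
  intros Hz. destruct (growing_cv (fun n => hit_within d R0 A B n z)) as [l Hl].
  - intros n. apply hit_within_mono, Hz.
  - exists 1. intros x [n ->]. apply hit_within_bounds, Hz.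
  - unfold hit_prob. rewrite (lim_eq _ _ Hl). exact Hl.
Qed.

Lemma hit_prob_B z : B z -> hit_prob z = 1.
Proof.
  intros HB. apply lim_eq. apply (cv_ext (fun _ => 1)); [|apply cv_const].
  intros n. destruct n; simpl; rewrite (proj2 (decP_true _) HB); reflexivity.
Qed.

Lemma hit_prob_A z : A z -> ~ B z -> hit_prob z = 0.
Proof.
  intros HA HB. apply lim_eq. apply (cv_ext (fun _ => 0)); [|apply cv_const].
  intros n. apply decP_true in HA. apply decP_false in HB.
  destruct n; simpl; rewrite HA, HB; reflexivity.
Qed.

Lemma hit_prob_step z : (z < d)%nat -> ~ B z -> ~ A z ->
  hit_prob z = sumR d (fun w => jumpP d R0 z w * hit_prob w).
Proof.
  intros Hz HB HA. apply (UL_sequence (fun n => hit_within d R0 A B (n + 1) z)).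
  - apply (CV_shift' (fun n => hit_within d R0 A B n z)), hit_within_cv, Hz.
  - apply (cv_ext (fun n => sumR d (fun w => jumpP d R0 z w * hit_within d R0 A B n w)));
      [intros n; rewrite Nat.add_1_r, hit_within_S, (proj2 (decP_false _) HB),
         (proj2 (decP_false _) HA); reflexivity|].
    apply cv_sumR. intros w Hw. apply CV_mult; [apply cv_const|apply hit_within_cv, Hw].
Qed.

Lemma escape_eq eta : escape d R0 A B eta = sumR d (fun w => jumpP d R0 eta w * hit_prob w).
Proof.
  apply lim_eq, cv_sumR. intros w Hw. apply CV_mult; [apply cv_const|apply hit_within_cv, Hw].
Qed.

Definition flux (eta : nat) : R :=
  sumR d (fun z => if Nat.eq_dec z eta then 0 else R0 eta z * hit_prob z).

Lemma Cap_flux (m : nat -> R) :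
  Cap d R0 m A B = sumR d (fun eta => if decP (A eta) then m eta * flux eta else 0).
Proof.
  apply sumR_ext. intros eta Heta. destruct (decP (A eta)); [|reflexivity].
  rewrite Rmult_assoc, escape_eq, <- sumR_scal. f_equal. apply sumR_ext. intros z _.
  rewrite <- Rmult_assoc, holding_jumpP by exact Heta. destruct (Nat.eq_dec z eta); ring.
Qed.

Lemma Cap_ratio_weights (m w : nat -> R) : 0 < sumR d w ->
  0 < sumR d (fun eta => if decP (A eta) then w eta else 0) ->
  (forall eta, (eta < d)%nat -> m eta = / sumR d w * w eta) ->
  Cap d R0 m A B / measure d m A
  = sumR d (fun eta => if decP (A eta) then w eta * flux eta else 0)
    / sumR d (fun eta => if decP (A eta) then w eta else 0).
Proof.
  intros Hw HwA Hm. rewrite Cap_flux. unfold measure.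
  replace (sumR d (fun eta => if decP (A eta) then m eta * flux eta else 0))
    with (/ sumR d w * sumR d (fun eta => if decP (A eta) then w eta * flux eta else 0)).
  replace (sumR d (fun eta => if decP (A eta) then m eta else 0))
    with (/ sumR d w * sumR d (fun eta => if decP (A eta) then w eta else 0)).
  - field. split; lra.
  - rewrite <- sumR_scal. apply sumR_ext. intros eta Heta.
    destruct (decP (A eta)); [symmetry; apply Hm, Heta|ring].
  - rewrite <- sumR_scal. apply sumR_ext. intros eta Heta.
    destruct (decP (A eta)); [rewrite Hm by exact Heta; ring|ring].
Qed.

End HittingProbabilities.

(** * Capacities *)

Definition all_states : nat -> bool := fun _ => true.

Lemma out_rate_all d q z : out_rate d all_states q z = holding d q z.
Proof.
  apply sumR_ext. intros x _. rewrite sremove_spec. destruct (Nat.eq_dec x z); reflexivity.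
Qed.

Lemma restrict_all_remove d (F : nat -> R) z :
  restrict d (sremove all_states z) F = sumR d (fun x => if Nat.eq_dec x z then 0 else F x).
Proof.
  apply sumR_ext. intros x _. rewrite sremove_spec. destruct (Nat.eq_dec x z); reflexivity.
Qed.

Lemma mem_all d x : mem d all_states x <-> (x < d)%nat.
Proof. unfold mem, all_states. tauto. Qed.

Lemma normalized_weights d (m w : nat -> R) : sumR d m = 1 -> 0 < sumR d w ->
  (forall x y, (x < d)%nat -> (y < d)%nat -> m x * w y = m y * w x) ->
  forall x, (x < d)%nat -> m x = / sumR d w * w x.
Proof.
  intros Hm Hw Hprop x Hx. apply (Rmult_eq_reg_r (sumR d w)); [|lra].
  rewrite (Rmult_comm (/ sumR d w)), Rmult_assoc, Rinv_l, Rmult_1_r by lra.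
  rewrite <- sumR_scal. transitivity (sumR d (fun y => w x * m y)).
  - apply sumR_ext. intros y Hy. rewrite (Hprop x y Hx Hy). ring.
  - rewrite sumR_scal, Hm. ring.
Qed.

Section Capacities.

Variables (d : nat) (RN : nat -> nat -> nat -> R) (mu : nat -> nat -> R).
Hypothesis rates_nonneg :
  forall N eta xi, (eta < d)%nat -> (xi < d)%nat -> eta <> xi -> 0 <= RN N eta xi.
Hypothesis irred : forall N, irreducible d (RN N).
Hypothesis inv : forall N, invariant_prob d (RN N) (mu N).
Hypothesis HA : AssumptionA d RN.

Lemma regular_rates_all : regular_rates d RN all_states RN.
Proof.
  split; [|split].
  - intros N a b Ha Hb Hab. apply rates_nonneg; [apply Ha|apply Hb|exact Hab].
  - intros N a b [Ha _] [Hb _]. pose proof (irred N a b Ha Hb) as Hr. clear Ha Hb.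
    induction Hr as [x y (Hx & Hy & Hxy & Hq)| |].
    + apply rt_step. unfold edge_in. rewrite !mem_all. auto.
    + apply rt_refl.
    + eapply rt_trans; eauto.
  - intros a b Ha Hb Hab.
    apply homRat_of_posPoly, posPoly_rate; [exact HA|apply Ha|apply Hb|exact Hab].
Qed.

Lemma holding_pos a v : (a < d)%nat -> (v < d)%nat -> a <> v ->
  forall N z, (z < d)%nat -> 0 < holding d (RN N) z.
Proof.
  intros Ha Hv Hav N z Hz. rewrite <- out_rate_all.
  destruct regular_rates_all as (Hnn & Hc & _).
  destruct (Nat.eq_dec z a) as [->|Hza].
  - apply (out_rate_pos d all_states (RN N) (Hnn N) a v); auto; apply mem_all; assumption.
  - apply (out_rate_pos d all_states (RN N) (Hnn N) z a); auto; apply mem_all; assumption.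
Qed.

Lemma hit_prob_homRat (A B : nat -> Prop) a v : (a < d)%nat -> A a -> (v < d)%nat -> a <> v ->
  forall z, (z < d)%nat -> homRat d RN 0 (fun N => hit_prob d (RN N) A B z).
Proof.
  intros Ha HAa Hv Hav z Hz.
  pose proof (holding_pos a v Ha Hv Hav) as Hhold.
  set (h := fun N => hit_prob d (RN N) A B).
  assert (Hharm : forall N, harmonic_on d all_states (RN N) (fun x => decP (A x))
                                        (fun x => decP (B x)) (h N)).
  { intros N x Hx HAx HBx. apply mem_all in Hx. rewrite decP_false in HAx, HBx.
    unfold h. rewrite out_rate_all, restrict_all_remove.
    rewrite (hit_prob_step d (RN N) A B (Hhold N) (rates_nonneg N)) by auto.
    rewrite <- sumR_scal. apply sumR_ext. intros y _.
    rewrite <- Rmult_assoc, (holding_jumpP d (RN N) (Hhold N)) by exact Hx.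
    destruct (Nat.eq_dec y x); ring. }
  eapply (harmonic_homRat d RN HA _ _ h); [| |reflexivity|exact regular_rates_all| |exact Hharm|].
  - intros N x HBx. rewrite decP_true in HBx. apply hit_prob_B, HBx.
  - intros N x HAx HBx. rewrite decP_true in HAx. rewrite decP_false in HBx.
    apply hit_prob_A; assumption.
  - exists a. split; [apply mem_all, Ha|rewrite decP_true; exact HAa].
  - apply mem_all, Hz.
Qed.

Lemma invariant_on_all N : invariant_on d all_states (RN N) (mu N).
Proof.
  intros x Hx. apply mem_all in Hx. destruct (inv N) as (_ & _ & Hbal).
  rewrite restrict_all_remove, out_rate_all, <- (Hbal x Hx). apply sumR_ext. intros y _.
  destruct (Nat.eq_dec y x); reflexivity.
Qed.

Lemma cap_ratio_homRat (A B : nat -> Prop) a v : (a < d)%nat -> A a -> (v < d)%nat -> a <> v ->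
  homRat d RN 1 (fun N => Cap d (RN N) (mu N) A B / measure d (mu N) A).
Proof.
  intros Ha HAa Hv Hav.
  pose proof (holding_pos a v Ha Hv Hav) as Hhold.
  destruct (invariant_weights_exist d RN HA mu _ all_states RN eq_refl regular_rates_all
              invariant_on_all) as (w & Wrat & Wpos & Wprop).
  set (wA := fun N eta => if decP (A eta) then w N eta else 0).
  set (fluxA := fun N eta => if decP (A eta) then w N eta * flux d (RN N) A B eta else 0).
  assert (Wsum : forall N, 0 < sumR d (w N)).
  { intros N. apply (sumR_pos _ _ a Ha); [intros; apply Rlt_le|]; apply Wpos, mem_all; assumption. }
  assert (WApos : forall N, 0 < sumR d (wA N)).
  { intros N. apply (sumR_pos _ _ a Ha).
    - intros x Hx. unfold wA. destruct (decP (A x)); [apply Rlt_le, Wpos, mem_all, Hx|lra].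
    - unfold wA. rewrite (proj2 (decP_true _) HAa). apply Wpos, mem_all, Ha. }
  apply (homRat_ext d RN 1 (fun N => sumR d (fluxA N) / sumR d (wA N))).
  - apply (homRat_div d RN 1 0); [exact HA| | |exact WApos]; apply homRat_sumR; intros eta Heta;
      unfold fluxA, wA; (destruct (decP (A eta)); [|apply homRat_zero]).
    + apply (homRat_mul d RN 0 1); [apply Wrat, mem_all, Heta|].
      apply homRat_sumR. intros z Hz. destruct (Nat.eq_dec z eta) as [|Hze]; [apply homRat_zero|].
      apply (homRat_mul d RN 1 0).
      * apply homRat_of_posPoly, posPoly_rate; auto.
      * apply (hit_prob_homRat A B a v); assumption.
    + apply Wrat, mem_all, Heta.
  - intros N. symmetry.
    apply Cap_ratio_weights; [apply Hhold|apply rates_nonneg|apply Wsum|apply WApos|].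
    apply normalized_weights; [apply (inv N)|apply Wsum|].
    intros x y Hx Hy. apply Wprop; apply mem_all; assumption.
Qed.

End Capacities.

Lemma rclass_self d R0 a : recurrent d R0 a -> rclass d R0 a a.
Proof. intros Ha. split; [exact Ha|split; apply rt_refl]. Qed.

Theorem mainTheorem17 (d : nat) (RN : nat -> nat -> nat -> R) (mu : nat -> nat -> R) :
  (forall N eta xi, (eta < d)%nat -> (xi < d)%nat -> eta <> xi -> 0 <= RN N eta xi) ->
  (forall N, irreducible d (RN N)) ->
  (forall N, invariant_prob d (RN N) (mu N)) ->
  AssumptionA d RN ->
  (exists a b, recurrent d (Rlim d RN) a /\ recurrent d (Rlim d RN) b /\
               ~ reach d (Rlim d RN) a b) ->
  ordered_on (recurrent d (Rlim d RN))
    (fun a N => Cap d (RN N) (mu N) (rclass d (Rlim d RN) a) (rbreve d (Rlim d RN) a)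
                / measure d (mu N) (rclass d (Rlim d RN) a)).
Proof.
  (* Two distinct states suffice. *)
  intros Hnn Hirr Hinv HA _ r s Hr Hs Hrs.
  apply (homRat_ratio_cv d RN 1 _ _ HA).
  - apply (cap_ratio_homRat d RN mu Hnn Hirr Hinv HA _ _ r s);
      [apply Hr|apply rclass_self, Hr|apply Hs|exact Hrs].
  - apply (cap_ratio_homRat d RN mu Hnn Hirr Hinv HA _ _ s r);
      [apply Hs|apply rclass_self, Hs|apply Hr|auto].
Qed.
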